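(* Let $M$ be a finitely generated permutable monoid. Then the language $\{a^nb^n : n\ge1\}^*$ over $\{a,b\}$ does not belong to $\mathfrak{L}_{Rat}(M)$.
   Context: A monoid $M$ is permutable if for some $n\ge 2$, for all $s_1,\dots,s_n\in M$ there is a non-identity permutation $\sigma$ of $\{1,\dots,n\}$ with $s_1\cdots s_n=s_{\sigma(1)}\cdots s_{\sigma(n)}$. An $M$-automaton is a tuple $(Q,\Sigma,M,\delta,q_0,Q_a)$ with finite state set, input alphabet $\Sigma$, initial state $q_0$, accept states $Q_a$, and $\delta: Q\times(\Sigma\cup\{\varepsilon\})\to\mathbb{P}(Q\times M)$ finite-valued; $(q',m)\in\delta(q,\sigma)$ means reading $\sigma$ in state $q$ it may go to $q'$ and multiply the register on the right by $m$. A rational monoid automaton over $M$ is an $M$-automaton with rational subsets $I_0,I_1\subseteq M$; $w$ is accepted if some computation reading $w$ from $q_0$ to an accept state has register product $x$ with $x_0x\in I_1$ for some $x_0\in I_0$. $\mathfrak{L}_{Rat}(M)$ is the family of languages so accepted. *)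

From mathcomp Require Import all_boot all_fingroup.
From Stdlib Require List.
Set Implicit Arguments.
Unset Strict Implicit.
Unset Printing Implicit Defensive.

Record monoid := Monoid {
  mcarrier :> Type;
  mmul : mcarrier -> mcarrier -> mcarrier;
  mone : mcarrier;
  mmulA : forall x y z, mmul x (mmul y z) = mmul (mmul x y) z;
  mmul1l : forall x, mmul mone x = x;
  mmul1r : forall x, mmul x mone = x
}.

Definition mprod (M : monoid) (l : list M) : M := List.fold_right (@mmul M) (mone M) l.

Definition finitely_generated (M : monoid) : Prop :=
  exists gens : list M, forall x : M,
    exists l : list M, (forall g, List.In g l -> List.In g gens) /\ mprod l = x.

Definition permutable (M : monoid) : Prop :=
  exists n : nat, 2 <= n /\
    forall s : 'I_n -> M, exists sigma : {perm 'I_n},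
      sigma != 1%g /\
      mprod (map s (enum 'I_n)) = mprod (map (fun i => s (sigma i)) (enum 'I_n)).

Inductive ratexp (M : monoid) : Type :=
| REmpty : ratexp M
| RElt : M -> ratexp M
| RUnion : ratexp M -> ratexp M -> ratexp M
| RProd : ratexp M -> ratexp M -> ratexp M
| RStar : ratexp M -> ratexp M.

Fixpoint rsem (M : monoid) (e : ratexp M) : M -> Prop :=
  match e with
  | REmpty => fun _ => False
  | RElt m => fun x => x = m
  | RUnion e1 e2 => fun x => rsem e1 x \/ rsem e2 x
  | RProd e1 e2 => fun x => exists y z, rsem e1 y /\ rsem e2 z /\ x = mmul y z
  | RStar e1 => fun x => exists l : list M,
                  (forall y, List.In y l -> rsem e1 y) /\ x = mprod l
  end.

(* the rational subsets: smallest family containing finite sets and closed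
   under union, product and Kleene star *)
Definition rational (M : monoid) (X : M -> Prop) : Prop :=
  exists e : ratexp M, forall x, X x <-> rsem e x.

Record mautomaton (M : monoid) (Sigma : Type) := MAutomaton {
  state : finType;
  (* delta q (Some a) / delta q None (epsilon): finite list of (q', m) *)
  delta : state -> option Sigma -> list (state * M);
  q0 : state;
  accepting : state -> Prop
}.
Arguments delta {M Sigma} A _ _ : rename.
Arguments accepting {M Sigma} A _ : rename.
Arguments q0 {M Sigma} A : rename.
Arguments state {M Sigma} A : rename.

(* run A q w x q' : from q, reading w, the automaton can reach q' with
   register product x (register starts at 1, multiplied on the right) *)
Inductive run (M : monoid) (Sigma : Type) (A : mautomaton M Sigma) :
  state A -> list Sigma -> M -> state A -> Prop :=
| run_nil : forall q, @run M Sigma A q nil (mone M) q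
| run_letter : forall q a q1 m w x q',
    List.In (q1, m) (delta A q (Some a)) -> @run M Sigma A q1 w x q' ->
    @run M Sigma A q (a :: w) (mmul m x) q'
| run_eps : forall q q1 m w x q',
    List.In (q1, m) (delta A q None) -> @run M Sigma A q1 w x q' ->
    @run M Sigma A q w (mmul m x) q'.

Definition rat_accepts (M : monoid) (Sigma : Type) (A : mautomaton M Sigma)
  (I0 I1 : M -> Prop) (w : list Sigma) : Prop :=
  exists (q : state A) (x : M), @run M Sigma A (q0 A) w x q /\ accepting A q /\
    exists x0, I0 x0 /\ I1 (mmul x0 x).

Definition in_LRat (M : monoid) (Sigma : Type) (L : list Sigma -> Prop) : Prop :=
  exists (A : mautomaton M Sigma) (I0 I1 : M -> Prop),
    rational I0 /\ rational I1 /\ forall w, L w <-> rat_accepts A I0 I1 w.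

Inductive ab : Type := La | Lb.

Inductive anbn_star : list ab -> Prop :=
| anbn_nil : anbn_star nil
| anbn_cons : forall n w, 1 <= n -> anbn_star w ->
    anbn_star (nseq n La ++ nseq n Lb ++ w).

From HB Require Import structures.
From mathcomp Require Import all_boot all_fingroup zify.
Set Implicit Arguments.
Unset Strict Implicit.
Unset Printing Implicit Defensive.

(* The word (ab)(a^2b^2)...(a^kb^k) of the language factors as
   R_0 R_1 ... R_(k-1) b^k with rungs R_i = b^i a^(i+1). Along an accepting
   run of an automaton with N states, if k > N n, the pigeonhole principle
   gives cut points c_0 < ... < c_n between rungs at which the run is in the
   same state, so the run contains n consecutive loops. Permutability of
   degree n reorders these loops non-trivially without changing the register,
   so the reordered word is accepted as well. At the first loop that moved, a
   factor a^(c_t) ends up followed by b^(c_j) with c_j <> c_t, so the new word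
   is not in the language. *)

HB.instance Definition _ (M : monoid) :=
  Monoid.isLaw.Build M (mone M) (@mmul M) (@mmulA M) (@mmul1l M) (@mmul1r M).

Lemma mprodE (M : monoid) (l : seq M) : mprod l = \big[@mmul M/mone M]_(x <- l) x.
Proof. by elim: l => [|x l IHl]; rewrite ?big_nil // big_cons -IHl. Qed.

Lemma big_nat_chunks (R : Type) (idx : R) (op : Monoid.law idx)
    (c : nat -> nat) (F : nat -> R) t :
  (forall i j, i <= j <= t -> c i <= c j) ->
  \big[op/idx]_(0 <= j < t) \big[op/idx]_(c j <= i < c j.+1) F i
    = \big[op/idx]_(c 0 <= i < c t) F i.
Proof.
elim: t => [|t IHt] c_le; first by rewrite !big_geq.
rewrite big_nat_recr //= IHt => [|i j le_ijt]; last by apply: c_le; lia.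
by rewrite -big_cat_nat //; apply: c_le; lia.
Qed.

Lemma pigeonhole_count (T : finType) (f : nat -> T) (s : seq nat) n :
  #|T| * n < size s -> exists q, n < count (fun i => f i == q) s.
Proof.
move=> large; have [q|small] := pickP (fun q => n < count (fun i => f i == q) s).
  by exists q.
suff: size s <= #|T| * n by rewrite leqNgt large.
rewrite -sum1_size (partition_big f predT) //= -sum_nat_const.
by apply: leq_sum => q _; rewrite sum1_count leqNgt small.
Qed.

Lemma pigeonhole_chain (T : finType) (f : nat -> T) n k : #|T| * n < k ->
  exists c : nat -> nat,
    [/\ forall i j, i < j <= n -> c i < c j, 0 < c 0, c n <= k
      & forall j, j <= n -> f (c j) = f (c 0)].
Proof.
rewrite -{1}(size_iota 1 k) => /(pigeonhole_count f)[q]; rewrite -size_filter.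
set F := filter _ _ => large.
have F_sorted : sorted ltn F := sorted_filter ltn_trans _ (iota_ltn_sorted 1 k).
have F_nth j : j <= n -> [/\ 0 < nth 0 F j, nth 0 F j <= k & f (nth 0 F j) = q].
  move=> le_jn; have := mem_nth 0 (leq_ltn_trans le_jn large).
  by rewrite mem_filter mem_iota => /andP[/eqP-> /andP[? ?]]; split=> //; lia.
exists (nth 0 F); split.
- move=> i j /andP[lt_ij le_jn].
  by apply: (sorted_ltn_nth ltn_trans 0 F_sorted) => //; rewrite inE; lia.
- by have [] := F_nth 0 isT.
- by have [] := F_nth n (leqnn n).
- by move=> j le_jn; have [_ _ ->] := F_nth j le_jn; have [_ _ ->] := F_nth 0 isT.
Qed.

Lemma incr_chain_leq (c : nat -> nat) n :
  (forall i j, i < j <= n -> c i < c j) -> forall i j, i <= j <= n -> c i <= c j.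
Proof.
move=> c_lt i j /andP[]; rewrite leq_eqVlt => /orP[/eqP-> //|lt_ij le_jn].
by rewrite ltnW ?c_lt ?lt_ij.
Qed.

Section Runs.
Variables (M : monoid) (S : Type) (A : mautomaton M S).
Local Notation run := (@run M S A).

Lemma run_cat p u x q v y r :
  run p u x q -> run q v y r -> run p (u ++ v) (mmul x y) r.
Proof.
elim=> {p u x q} [p|p a q1 m w x q Hin _ IH|p q1 m w x q Hin _ IH] run_v.
- by rewrite mmul1l.
- by rewrite -mmulA cat_cons; apply: run_letter Hin (IH run_v).
- by rewrite -mmulA; apply: run_eps Hin (IH run_v).
Qed.

Lemma run_cat_inv p u v z r : run p (u ++ v) z r ->
  exists q x y, [/\ run p u x q, run q v y r & z = mmul x y].
Proof.
move E: (u ++ v) => w run_w; elim: run_w u E => {p w z r}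
  [p|p a q1 m w x q Hin run_w IH|p q1 m w x q Hin run_w IH] u.
- case: u => [|//] /= ->; exists p, (mone M), (mone M).
  by rewrite mmul1l; split=> //; apply: run_nil.
- case: u => [/= ->|b u [-> /IH[q2 [x1 [x2 [run_u run_v ->]]]]]].
    exists p, (mone M), (mmul m x); rewrite mmul1l; split=> //; first exact: run_nil.
    exact: run_letter Hin run_w.
  exists q2, (mmul m x1), x2; rewrite mmulA; split=> //.
  exact: run_letter Hin run_u.
- move=> /IH[q2 [x1 [x2 [run_u run_v ->]]]].
  exists q2, (mmul m x1), x2; rewrite mmulA; split=> //.
  exact: run_eps Hin run_u.
Qed.

Lemma run_loops q (U : nat -> seq S) (m : nat -> M) (l : seq nat) :
  (forall j, j \in l -> run q (U j) (m j) q) ->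
  run q (\big[cat/[::]]_(j <- l) U j) (\big[@mmul M/mone M]_(j <- l) m j) q.
Proof.
elim: l => [|j l IHl] loop; first by rewrite !big_nil; apply: run_nil.
rewrite !big_cons; apply: run_cat (loop _ (mem_head _ _)) (IHl _) => i l_i.
by apply: loop; rewrite inE l_i orbT.
Qed.

Lemma run_big_nat (W : nat -> seq S) (st : nat -> state A) (m : nat -> M) i k :
  i <= k -> (forall j, i <= j < k -> run (st j) (W j) (m j) (st j.+1)) ->
  run (st i) (\big[cat/[::]]_(i <= j < k) W j)
      (\big[@mmul M/mone M]_(i <= j < k) m j) (st k).
Proof.
elim: k => [|k IHk]; first by rewrite leqn0 => /eqP-> _; rewrite !big_geq //; apply: run_nil.
rewrite leq_eqVlt => /orP[/eqP-> _|le_ik step]; first by rewrite !big_geq //; apply: run_nil.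
rewrite !big_nat_recr //; apply: run_cat (IHk le_ik _) (step _ _) => [j ?|]; last lia.
by apply: step; lia.
Qed.

Lemma run_big_nat_inv (W : nat -> seq S) k p v z r :
  run p (\big[cat/[::]]_(0 <= j < k) W j ++ v) z r ->
  exists (st : nat -> state A) (m : nat -> M) y,
    [/\ st 0 = p, forall j, j < k -> run (st j) (W j) (m j) (st j.+1),
        run (st k) v y r & z = mmul (\big[@mmul M/mone M]_(0 <= j < k) m j) y].
Proof.
elim: k v z => [|k IHk] v z.
  rewrite big_geq // => run_v; exists (fun=> p), (fun=> mone M), z.
  by rewrite big_geq // mmul1l.
rewrite big_nat_recr //= -catA.
move=> /IHk[st [m [y [st0 step /run_cat_inv[q [x [y' [run_k run_v ->]]]] ->]]]].
exists (fun j => if j == k.+1 then q else st j), (fun j => if j == k then x else m j), y'.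
split=> [//|j lt_jk||]; rewrite ?eqxx //.
- rewrite (ltn_eqF lt_jk) eqSS; have [->//|neq_jk] := eqVneq j k.
  by apply: step; rewrite ltn_neqAle neq_jk -ltnS.
- rewrite big_nat_recr //= eqxx mmulA; congr (mmul (mmul _ _) _).
  by apply: eq_big_nat => j /andP[_ lt_jk]; rewrite ltn_eqF.
Qed.

Lemma run_loop_factorization (W : nat -> seq S) n k p v z r :
  #|state A| * n < k ->
  run p (\big[cat/[::]]_(0 <= j < k) W j ++ v) z r ->
  exists (c : nat -> nat) (m : nat -> M) (x y : M),
    [/\ forall i j, i < j <= n -> c i < c j, 0 < c 0,
        z = mmul x (mmul (\big[@mmul M/mone M]_(0 <= j < n) m j) y)
      & forall l, (forall j, j \in l -> j < n) ->
        run p (\big[cat/[::]]_(0 <= i < c 0) W i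
               ++ \big[cat/[::]]_(j <- l) \big[cat/[::]]_(c j <= i < c j.+1) W i
               ++ \big[cat/[::]]_(c n <= i < k) W i ++ v)
            (mmul x (mmul (\big[@mmul M/mone M]_(j <- l) m j) y)) r].
Proof.
move=> large /run_big_nat_inv[st [ms [y [st0 step run_v ->]]]].
have [c [c_lt c0_gt0 cn_le same_state]] := pigeonhole_chain st large.
have c_le := incr_chain_leq c_lt.
have c_le_k j : j <= n -> c j <= k.
  by move=> le_jn; apply: leq_trans cn_le; rewrite c_le ?le_jn ?leqnn.
have run_seg i j : i <= j <= k -> run (st i) (\big[cat/[::]]_(i <= h < j) W h)
    (\big[@mmul M/mone M]_(i <= h < j) ms h) (st j).
  by case/andP=> le_ij le_jk; apply: run_big_nat => // h ?; apply: step; lia.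
exists c, (fun j => \big[@mmul M/mone M]_(c j <= i < c j.+1) ms i),
  (\big[@mmul M/mone M]_(0 <= i < c 0) ms i),
  (mmul (\big[@mmul M/mone M]_(c n <= i < k) ms i) y).
split=> // [|l l_lt_n].
  rewrite big_nat_chunks => [|i j ?]; last by apply: c_le; lia.
  have c0_le_cn : c 0 <= c n by rewrite c_le ?leqnn.
  rewrite !mmulA -(big_cat_nat (leq0n _) c0_le_cn) -(big_cat_nat (leq0n _) cn_le).
  reflexivity.
rewrite -st0; apply: run_cat (run_seg 0 (c 0) _) _; first exact: c_le_k.
apply: run_cat (run_loops _) _ => [j /l_lt_n lt_jn|].
  rewrite -{1}(same_state j (ltnW lt_jn)) -(same_state j.+1 lt_jn).
  by apply: run_seg; rewrite c_le ?c_le_k ?leqnSn.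
rewrite -(same_state n (leqnn n)); apply: run_cat (run_seg _ _ _) run_v.
by rewrite cn_le leqnn.
Qed.
End Runs.

Lemma permutable_reorder (M : monoid) : permutable M ->
  exists n, forall m : nat -> M, exists l,
    [/\ perm_eq l (iota 0 n), l != iota 0 n
      & \big[@mmul M/mone M]_(j <- l) m j = \big[@mmul M/mone M]_(0 <= j < n) m j].
Proof.
case=> n [_ perm_n]; exists n => m.
have [sigma [sigma_neq1 prod_eq]] := perm_n (fun i => m i).
have l_eq : [seq val (sigma i) | i <- enum 'I_n] = map val (map sigma (enum 'I_n)).
  exact: map_comp.
exists [seq val (sigma i) | i <- enum 'I_n]; split.
- rewrite l_eq -val_enum_ord; apply: perm_map.
  apply: uniq_perm; rewrite ?(map_inj_uniq perm_inj) ?enum_uniq // => i.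
  by rewrite mem_enum; apply/mapP; exists (sigma^-1 i)%g; rewrite ?mem_enum ?permKV.
- apply: contra sigma_neq1 => /eqP l_iota; apply/eqP/permP => i; rewrite perm1.
  have := congr1 (fun s => nth 0 s i) l_iota.
  by rewrite /= (nth_map i) ?size_enum_ord // nth_ord_enum nth_iota // => /val_inj.
- move: prod_eq; rewrite /index_iota subn0 -val_enum_ord !mprodE !big_map.
  by move=> ->.
Qed.

Lemma seq_first_diff (T : eqType) (s1 s2 : seq T) : size s1 = size s2 -> s1 != s2 ->
  exists p x y r1 r2, [/\ x != y, s1 = p ++ x :: r1 & s2 = p ++ y :: r2].
Proof.
elim: s1 s2 => [|x s1 IHs] [|y s2] //= [size_eq] neq.
have [eq_xy|neq_xy] := eqVneq x y; last by exists [::], x, y, s1, s2.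
have neq_s : s1 != s2 by apply: contraNneq neq => ->; rewrite eq_xy.
have [p [x' [y' [r1 [r2 [? -> ->]]]]]] := IHs s2 size_eq neq_s.
by exists (x :: p), x', y', r1, r2; rewrite eq_xy.
Qed.

Lemma perm_iota_first_moved n l : perm_eq l (iota 0 n) -> l != iota 0 n ->
  exists t j l', [/\ t < n, j < n, j != t & l = iota 0 t ++ j :: l'].
Proof.
move=> perm_l /(seq_first_diff (perm_size perm_l))[p [j [t [l' [r [neq_jt l_eq iota_eq]]]]]].
have lt_pn : size p < n by rewrite -(size_iota 0 n) iota_eq size_cat addnS ltnS leq_addr.
have p_eq : p = iota 0 (size p).
  have := congr1 (take (size p)) iota_eq.
  by rewrite take_iota take_size_cat // (minn_idPl (ltnW lt_pn)) => ->.
have t_eq : t = size p.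
  have := congr1 (nth 0 ^~ (size p)) iota_eq.
  by rewrite /= nth_iota // nth_cat ltnn subnn.
exists (size p), j, l'; split=> //; last by rewrite l_eq {1}p_eq.
- have : j \in l by rewrite l_eq mem_cat mem_head orbT.
  by rewrite (perm_mem perm_l) mem_iota.
- by rewrite -t_eq.
Qed.

Definition block (i : nat) : seq ab := nseq i La ++ nseq i Lb.
Definition rung (i : nat) : seq ab := nseq i Lb ++ nseq i.+1 La.
Definition stair (k : nat) : seq ab := \big[cat/[::]]_(0 <= i < k) rung i.

Lemma nseq_cat_inj (T : Type) (x y : T) i j s s' :
  x <> y -> head y s = y -> head y s' = y ->
  nseq i x ++ s = nseq j x ++ s' -> i = j /\ s = s'.
Proof.
move=> neq_xy hd_s hd_s'; elim: i j => [|i IHi] [|j] //=.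
- by move=> E; rewrite E /= in hd_s; case: (neq_xy hd_s).
- by move=> E; rewrite -E /= in hd_s'; case: (neq_xy hd_s').
- by case=> /IHi[-> ->].
Qed.

Lemma anbn_star_head w : anbn_star w -> head La w = La.
Proof. by case=> // -[|n] w'. Qed.

Lemma anbn_star_block_inv c d s : 0 < c -> 0 < d -> head La s = La ->
  anbn_star (nseq c La ++ nseq d Lb ++ s) -> c = d /\ anbn_star s.
Proof.
move=> c_gt0 d_gt0 hd_s; move E: (_ ++ _) => w w_in.
case: w_in E => [|e w' e_gt0 w'_in] E; first by case: c c_gt0 E.
have hd_b t i : 0 < i -> head Lb (nseq i Lb ++ t) = Lb by case: i.
have neq_ab : La <> Lb by [].
have [<- {}E] := nseq_cat_inj neq_ab (hd_b s d d_gt0) (hd_b w' e e_gt0) E.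
by have [-> ->] := nseq_cat_inj (nesym neq_ab) hd_s (anbn_star_head w'_in) E.
Qed.

Lemma anbn_star_blocks l w : (forall i, i \in l -> 0 < i) -> anbn_star w ->
  anbn_star (\big[cat/[::]]_(i <- l) block i ++ w).
Proof.
elim: l => [|i l IHl] l_gt0 w_in; first by rewrite big_nil.
rewrite big_cons -!catA; apply: anbn_cons; first by apply: l_gt0; rewrite mem_head.
by apply: IHl => // j l_j; apply: l_gt0; rewrite inE l_j orbT.
Qed.

Lemma anbn_star_blocksK l s : (forall i, i \in l -> 0 < i) -> head La s = La ->
  anbn_star (\big[cat/[::]]_(i <- l) block i ++ s) -> anbn_star s.
Proof.
elim: l => [|i l IHl] l_gt0 hd_s; first by rewrite big_nil.
have i_gt0 : 0 < i by apply: l_gt0; rewrite mem_head.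
have {}l_gt0 j : j \in l -> 0 < j by move=> l_j; apply: l_gt0; rewrite inE l_j orbT.
have hd_rest : head La (\big[cat/[::]]_(j <- l) block j ++ s) = La.
  case: l l_gt0 {IHl} => [|j l] l_gt0; rewrite ?big_nil ?big_cons //.
  by move: (l_gt0 j (mem_head _ _)); case: j {l_gt0}.
rewrite big_cons -!catA => /(anbn_star_block_inv i_gt0 i_gt0 hd_rest)[_].
exact: IHl.
Qed.

Lemma stair_blocks c :
  stair c.+1 = \big[cat/[::]]_(1 <= i < c.+1) block i ++ nseq c.+1 La.
Proof.
elim: c => [|c IHc]; first by rewrite /stair big_nat1 big_geq.
rewrite /stair big_nat_recr //= -/(stair c.+1) IHc [in RHS]big_nat_recr //=.
by rewrite /block /rung -!catA.
Qed.

Lemma stair_anbn_star k : anbn_star (stair k ++ nseq k Lb).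
Proof.
case: k => [|k]; first by rewrite /stair big_geq //; apply: anbn_nil.
have -> : stair k.+1 ++ nseq k.+1 Lb = \big[cat/[::]]_(1 <= i < k.+2) block i ++ [::].
  by rewrite stair_blocks [in RHS]big_nat_recr //= cats0 /block -catA.
by apply: anbn_star_blocks anbn_nil => i; rewrite mem_index_iota => /andP[].
Qed.

Lemma stair_mismatch c d r : 0 < c -> 0 < d ->
  anbn_star (stair c ++ nseq d Lb ++ La :: r) -> c = d.
Proof.
case: c => [//|c] _ d_gt0; rewrite stair_blocks -catA.
have blocks_gt0 i : i \in index_iota 1 c.+1 -> 0 < i by rewrite mem_index_iota => /andP[].
move=> /(anbn_star_blocksK blocks_gt0 (s := nseq c.+1 La ++ _) (erefl _)).
by case/(anbn_star_block_inv (ltn0Sn c) d_gt0 (s := La :: r) (erefl _)).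
Qed.

Lemma stair_reordered_notin (c : nat -> nat) n l r :
  (forall i j, i < j <= n -> c i < c j) -> 0 < c 0 ->
  perm_eq l (iota 0 n) -> l != iota 0 n ->
  ~ anbn_star (stair (c 0)
      ++ \big[cat/[::]]_(j <- l) \big[cat/[::]]_(c j <= i < c j.+1) rung i ++ r).
Proof.
move=> c_lt c0_gt0 perm_l /(perm_iota_first_moved perm_l)[t [j [l' [lt_tn lt_jn neq_jt ->]]]].
have c_le := incr_chain_leq c_lt.
have c0_le_ct : c 0 <= c t := c_le 0 t (ltnW lt_tn).
have lt_cj : c j < c j.+1 by apply: c_lt; rewrite ltnSn lt_jn.
have -> : iota 0 t = index_iota 0 t by rewrite /index_iota subn0.
rewrite big_cat big_cons /= big_nat_chunks => [|i h ?]; last by apply: c_le; lia.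
rewrite -!catA catA -big_cat_nat // -/(stair (c t)) big_ltn // [rung (c j)]/rung -!catA /=.
have cj_gt0 : 0 < c j := leq_trans c0_gt0 (c_le 0 j (ltnW lt_jn)).
move=> /(stair_mismatch (leq_trans c0_gt0 c0_le_ct) cj_gt0) eq_c.
by move: (c_lt t j) (c_lt j t) neq_jt; rewrite eq_c ltnn; lia.
Qed.

Theorem corollary1 (M : monoid) :
  finitely_generated M -> permutable M -> ~ in_LRat M anbn_star.
Proof.
move=> _ /permutable_reorder[n reorder] [A [I0 [I1 [_ [_ accepts]]]]].
pose k := (#|state A| * n).+1.
have [q [z [run_w [acc_q acc_z]]]] := (accepts _).1 (stair_anbn_star k).
have [c [m [x [y [c_lt c0_gt0 z_eq run_l]]]]] :=
  run_loop_factorization (W := rung) (ltnSn _) run_w.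
have [l [perm_l neq_l prod_l]] := reorder m.
apply: (stair_reordered_notin c_lt c0_gt0 perm_l neq_l); apply/accepts.
exists q, z; split=> //; rewrite z_eq -prod_l; apply: run_l => j.
by rewrite (perm_mem perm_l) mem_iota.
Qed.
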